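(* Let $w_0\to w_1\to\dots\to w_t$ be a reduced computation (as defined in the context). If $|w_0|_{\mathcal{A}}<|w_1|_{\mathcal{A}}$, then $|w_{i-1}|_{\mathcal{A}}\le|w_i|_{\mathcal{A}}$ for all $1\le i\le t$.
   Context: Let $\mathcal{A}$ be a finite non-empty alphabet, $\mathcal{A}_1=\{a_1:a\in\mathcal{A}\}$ a disjoint copy of $\mathcal{A}$, and $\mathcal{B}=\{b_1,b_2\}$; let $F=F(\mathcal{A}_1\sqcup\mathcal{B})$ be the free group, whose elements are identified with reduced words. Let $D=4|\mathcal{A}|(|\mathcal{A}|+2)$, fix a bijection $\eta:(\mathcal{A}\sqcup\mathcal{B})\times\mathcal{A}\to\{1,\dots,D/4\}$, and for $y\in\mathcal{A}\sqcup\mathcal{B}$, $a\in\mathcal{A}$, with $k=\eta(y,a)$, put $v(y,a)=b_1^k(b_2b_1)^{D-2k}b_2^k$. For $y\in\mathcal{A}\sqcup\mathcal{B}$ let $\psi_y$ be the automorphism of $F$ fixing $b_1,b_2$ and sending $a_1\mapsto v(y,a)a_1$ for each $a\in\mathcal{A}$; let $u_y=b_i^{-1}$ if $y=b_i$ and $u_y=a_1^{-1}$ if $y=a\in\mathcal{A}$. For each $y$ there are two operations (''rules'') $\theta_y,\theta_y^{-1}$ on $F$: $w\cdot\theta_y=\psi_y(w)u_y$ and $w\cdot\theta_y^{-1}=\psi_y^{-1}(wu_y^{-1})$ (products freely reduced); these are mutually inverse. A computation is a sequence $w_0,\dots,w_t\in F$ with $w_i=w_{i-1}\cdot\theta_{y_i}^{\varepsilon_i}$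 for some $y_i\in\mathcal{A}\sqcup\mathcal{B}$, $\varepsilon_i\in\{\pm1\}$; its history is the word $\theta_{y_1}^{\varepsilon_1}\cdots\theta_{y_t}^{\varepsilon_t}$, and the computation is reduced if this word is freely reduced (no consecutive $\theta_y^{\varepsilon}\theta_y^{-\varepsilon}$). (This describes computations of the machine $\mathbf{M}_1^{\mathcal{A}}$ in the base $Q_0Q_1$, with configuration $q_0wq_1$ identified with $w$.) For $w\in F$, $|w|_{\mathcal{A}}$ is the number of letters of $w$ from $\mathcal{A}_1^{\pm1}$. *)

From mathcomp Require Import all_boot.
Set Implicit Arguments. Unset Strict Implicit. Unset Printing Implicit Defensive.

Section FreeGroup.
Variable A : finType.

(* Index set A ⊔ B: inl a = a (i.e. generator a_1), inr false = b_1, inr true = b_2. *)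
Definition Y := (A + bool)%type.
(* A letter is a generator together with an exponent flag: (x, false) = x, (x, true) = x^{-1}. *)
Definition letter := (Y * bool)%type.
Definition word := seq letter.

Definition linv (x : letter) : letter := (x.1, ~~ x.2).
Definition winv (w : word) : word := rev (map linv w).

(* reduced words = elements of F *)
Definition reducedw (w : word) : bool := sorted (fun x y => y != linv x) w.

Definition cons_red (x : letter) (w : word) : word :=
  match w with
  | y :: w' => if y == linv x then w' else x :: w
  | [::] => [:: x]
  end.
Definition reduce (w : word) : word := foldr cons_red [::] w.

Definition fmul (u v : word) : word := reduce (u ++ v).

Definition subst_hom (f : Y -> word) (w : word) : word :=
  reduce (flatten (map (fun x => if x.2 then winv (f x.1) else f x.1) w)).

Definition b1 : letter := (inr false, false).
Definition b2 : letter := (inr true, false).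

Definition Dconst : nat := 4 * #|A| * (#|A| + 2).

Definition vword (eta : Y * A -> nat) (y : Y) (a : A) : word :=
  let k := eta (y, a) in
  nseq k b1 ++ flatten (nseq (Dconst - 2 * k) [:: b2; b1]) ++ nseq k b2.

Definition psi (eta : Y * A -> nat) (y : Y) : word -> word :=
  subst_hom (fun z => match z with
                      | inl a => vword eta y a ++ [:: (inl a, false)]
                      | inr _ => [:: (z, false)]
                      end).

Definition psi_inv (eta : Y * A -> nat) (y : Y) : word -> word :=
  subst_hom (fun z => match z with
                      | inl a => winv (vword eta y a) ++ [:: (inl a, false)]
                      | inr _ => [:: (z, false)]
                      end).

Definition u_y (y : Y) : word := [:: (y, true)].

(* w . theta_y^e ; rule = (y, e) with e = false for theta_y, e = true for theta_y^{-1} *)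
Definition apply_rule (eta : Y * A -> nat) (r : Y * bool) (w : word) : word :=
  let y := r.1 in
  if r.2 then psi_inv eta y (fmul w (winv (u_y y)))
  else fmul (psi eta y w) (u_y y).

Definition inv_rule (r : Y * bool) : Y * bool := (r.1, ~~ r.2).

Definition countA (w : word) : nat := count (fun x : letter => if x.1 is inl _ then true else false) w.

End FreeGroup.

From mathcomp Require Import all_boot zify.
Set Implicit Arguments. Unset Strict Implicit. Unset Printing Implicit Defensive.

(* A rule [theta_b^(+-1)] preserves [|w|_A]: [psi_b] is an automorphism fixing
   the [b_i] and [u_b] is a [b]-letter.  A rule [theta_a^(+-1)] changes [|w|_A]
   by one, and lowers it only when the letter it appends cancels against the
   last letter of the word.  After an increasing step the last [A]-letter [c^s]
   of the word is followed by a tail [t] in [b_1, b_2] recording the rule [r]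
   just applied: [t] is empty if [r] is an [a]-rule; otherwise [t] ends with the
   [b]-letter appended by [r] if [s = 1], and begins with the head [b_1^k b_2] or
   [b_2^-k b_1^-1] of [v(b,c)^(+-1)], [k = eta(b,c)], if [s = -1].  Since [psi]
   only inserts [b]-words before [a_1] and after [a_1^-1], a next rule other
   than [r^-1] cannot reach [c^s] through [t]: when [s = -1] the old and the new
   heads have distinct [eta]-values or the same exponent signs, and the middle
   block [(b_2 b_1)^(D-2k)] of [v] is nonempty.  The tail is then renewed, so
   no [A]-letter is ever cancelled. *)

Section FreeGroup.
Variable A : finType.
Implicit Types (s t u v w : word A) (x y z : letter A).

Definition isA x : bool := if x.1 is inl _ then true else false.
Definition bword w : bool := all (fun x => ~~ isA x) w.
Definition same_sign (sg : bool) w : bool := all (fun x => x.2 == sg) w.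
Definition head_sign (sg : bool) w : bool := if w is x :: _ then x.2 == sg else true.

Lemma linvK : involutive (@linv A).
Proof. by case=> a e; rewrite /linv /= negbK. Qed.

Lemma linv_inj : injective (@linv A).
Proof. exact: inv_inj linvK. Qed.

Lemma isA_linv x : isA (linv x) = isA x.
Proof. by case: x. Qed.

Lemma winv_cat s t : winv (s ++ t) = winv t ++ winv s.
Proof. by rewrite /winv map_cat rev_cat. Qed.

Lemma winv_cons x s : winv (x :: s) = winv s ++ [:: linv x].
Proof. by rewrite /winv /= rev_cons -cats1. Qed.

Lemma winvK : involutive (@winv A).
Proof. by elim=> // x s IH; rewrite winv_cons winv_cat IH /= linvK. Qed.

Lemma winv_nseq n x : winv (nseq n x) = nseq n (linv x).
Proof. by rewrite /winv map_nseq rev_nseq. Qed.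

Lemma all_winv (p : pred (letter A)) s : all p (winv s) = all (p \o @linv A) s.
Proof. by rewrite /winv all_rev all_map. Qed.

Lemma countA_cat s t : countA (s ++ t) = countA s + countA t.
Proof. exact: count_cat. Qed.

Lemma countA_seq1 x : countA [:: x] = isA x.
Proof. by rewrite /countA /= addn0. Qed.

Lemma countA_winv s : countA (winv s) = countA s.
Proof. by rewrite /countA /winv count_rev count_map; apply: eq_count => -[[]]. Qed.

Lemma bword_cat s t : bword (s ++ t) = bword s && bword t.
Proof. exact: all_cat. Qed.

Lemma bword_winv s : bword (winv s) = bword s.
Proof. by rewrite /bword all_winv; apply: eq_all => -[[]]. Qed.

Lemma countA_bword s : bword s -> countA s = 0.
Proof. by elim: s => // -[[] e] s IH //= /andP[_ /IH]. Qed.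

Lemma reducedw_cat_cons s x t :
  reducedw (s ++ x :: t) = reducedw (s ++ [:: x]) && reducedw (x :: t).
Proof. by case: s => //= y s; rewrite /reducedw /= !cat_path /= andbT andbA. Qed.

Lemma reducedw_catl s t : reducedw (s ++ t) -> reducedw s.
Proof. by case: s => // x s; rewrite /reducedw /= cat_path => /andP[]. Qed.

Lemma reducedw_catr s t : reducedw (s ++ t) -> reducedw t.
Proof. by elim: s => // x s IH /path_sorted. Qed.

Lemma reducedw_tail x s : reducedw (x :: s) -> reducedw s.
Proof. exact: path_sorted. Qed.

Lemma reducedw_pair x y : reducedw [:: x; y] = (y != linv x).
Proof. by rewrite /reducedw /= andbT. Qed.

Lemma reducedw_same_sign sg s : same_sign sg s -> reducedw s.
Proof.
elim: s => // x [|y s] IH //= /and3P[/eqP Hx /eqP Hy Hs].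
rewrite /reducedw /=; apply/andP; split; last by apply: IH; rewrite /same_sign /= Hy eqxx.
by apply/eqP => E; move: Hy; rewrite E /= Hx; case: (sg).
Qed.

Lemma reducedw_cons_red x s : reducedw s -> reducedw (cons_red x s).
Proof.
case: s => [|y s] //= Hs; case: eqP => [_|/eqP Hy]; first exact: reducedw_tail Hs.
by rewrite /reducedw /= Hy.
Qed.

Lemma reduce_reduced w : reducedw (reduce w).
Proof. by elim: w => //= x w IH; apply: reducedw_cons_red. Qed.

Lemma reduce_id w : reducedw w -> reduce w = w.
Proof.
elim: w => //= x w IH Hw; rewrite IH ?(reducedw_tail Hw) //.
by case: w Hw {IH} => //= y w /andP[/negbTE -> _].
Qed.

Lemma cons_red_linv x s : reducedw s -> cons_red x (cons_red (linv x) s) = s.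
Proof.
case: s => [|y s] /= Hs; first by rewrite eqxx.
rewrite linvK; case: eqP => [<-|_] /=; last by rewrite eqxx.
by case: s Hs => //= z s /andP[/negbTE ->].
Qed.

Lemma foldr_cons_red_reduce s u :
  reducedw s -> foldr (@cons_red A) s u = foldr (@cons_red A) s (reduce u).
Proof.
elim: u => //= x u IH Hs; rewrite IH //.
have foldr_reduced t : reducedw (foldr (@cons_red A) s t).
  by elim: t => //= y t IHt; apply: reducedw_cons_red.
have := reduce_reduced u; case: (reduce u) => [|z r] //= _.
by case: eqP => [->|_] //=; rewrite cons_red_linv.
Qed.

Lemma reduce_cat u v : reduce (u ++ v) = foldr (@cons_red A) (reduce v) u.
Proof. exact: foldr_cat. Qed.

Lemma reduce_catl u v : reduce (u ++ v) = reduce (reduce u ++ v).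
Proof. by rewrite !reduce_cat -foldr_cons_red_reduce // reduce_reduced. Qed.

Lemma reduce_catr u v : reduce (u ++ v) = reduce (u ++ reduce v).
Proof. by rewrite !reduce_cat (reduce_id (reduce_reduced v)). Qed.

Lemma reduce_cancel u s v : reduce (u ++ s ++ winv s ++ v) = reduce (u ++ v).
Proof.
elim: s u v => // x s IH u v; rewrite winv_cons.
have -> : u ++ (x :: s) ++ (winv s ++ [:: linv x]) ++ v =
          (u ++ [:: x]) ++ s ++ winv s ++ linv x :: v by rewrite -!catA.
by rewrite IH -catA /= !reduce_cat /= cons_red_linv // reduce_reduced.
Qed.

Lemma reduce_cancel_l s v : reduce (s ++ winv s ++ v) = reduce v.
Proof. exact: reduce_cancel [::] s v. Qed.

Lemma reduce_cancel_r u s : reduce (u ++ s ++ winv s) = reduce u.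
Proof. by have := reduce_cancel u s [::]; rewrite !cats0. Qed.

Lemma reduce_rcons_cases w y : reducedw w ->
  reducedw (w ++ [:: y]) /\ reduce (w ++ [:: y]) = w ++ [:: y] \/
  exists w', w = w' ++ [:: linv y] /\ reduce (w ++ [:: y]) = w'.
Proof.
case/lastP: w => [|w z]; first by left.
rewrite -cats1 => Hw; case: (z =P linv y) => [Ez|/eqP Hz].
  right; exists w; split; first by rewrite Ez.
  have := reduce_cancel w [:: z] [::]; rewrite /winv /= Ez linvK cats0 -catA => ->.
  exact/reduce_id/(reducedw_catl Hw).
have Hr : reducedw ((w ++ [:: z]) ++ [:: y]).
  by rewrite -catA reducedw_cat_cons Hw reducedw_pair eq_sym (can2_eq linvK linvK).
by left; rewrite reduce_id.
Qed.

Lemma reduce_rcons_prefix P B y : reducedw (P ++ B) -> B <> [::] ->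
  exists B', reduce (P ++ B ++ [:: y]) = P ++ B'.
Proof.
move=> HPB HB; rewrite catA; case: (reduce_rcons_cases y HPB) => [[_ ->]|[w' [E ->]]].
  by exists (B ++ [:: y]); rewrite catA.
case/lastP: B HB HPB E => // B b _ _; rewrite -cats1 catA !cats1 => /rcons_inj[<- _].
by exists B.
Qed.

Lemma reduce_all (p : pred (letter A)) w : all p w -> all p (reduce w).
Proof.
elim: w => //= x w IH /andP[px /IH]; case: (reduce w) => [|y r] /=; first by rewrite px.
by case: eqP => _ /andP[py pr] //=; rewrite px py.
Qed.

Lemma bword_reduce w : bword w -> bword (reduce w).
Proof. exact: reduce_all. Qed.

Lemma countA_reduce w : countA (reduce w) <= countA w.
Proof.
elim: w => //= x w IH; apply: leq_trans (leq_add (leqnn (isA x)) IH).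
by case: (reduce w) => [|y r] //=; case: eqP => _ //=; lia.
Qed.

Lemma reducedw_cat_same_sign sg s t : reducedw s -> reducedw t -> same_sign sg s ->
  head_sign sg t -> reducedw (s ++ t).
Proof.
case/lastP: s => [|s l] // Hs; case: t => [|x t] Ht Hsg Hx; first by rewrite cats0.
rewrite -cats1 in Hs Hsg *; rewrite -catA reducedw_cat_cons Hs.
move: Ht Hsg; rewrite /reducedw /same_sign /= all_cat /= !andbT => -> /andP[_ /eqP Hl].
by rewrite andbT; apply/eqP => E; move: Hx; rewrite E /= Hl; case: (sg).
Qed.

Lemma reducedw_A_bword x t : isA x -> bword t -> reducedw t -> reducedw (x :: t).
Proof.
case: t => // y t Hx /andP[Hy _]; rewrite /reducedw /= => ->; rewrite andbT.
by apply: contraNneq Hy => ->; rewrite isA_linv.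
Qed.

Lemma reduce_A_bword P x t : reducedw (P ++ [:: x]) -> isA x -> bword t ->
  reduce (P ++ x :: t) = P ++ x :: reduce t.
Proof.
move=> HP Hx Ht; rewrite -cat_rcons reduce_catr cat_rcons reduce_id //.
rewrite reducedw_cat_cons HP reducedw_A_bword ?reduce_reduced //.
exact: reduce_all.
Qed.

Lemma countA_reduce_rcons_B w y : reducedw w -> ~~ isA y ->
  countA (reduce (w ++ [:: y])) = countA w.
Proof.
move=> Hw /negbTE Hy; case: (reduce_rcons_cases y Hw) => [[_ ->]|[w' [-> ->]]];
by rewrite countA_cat countA_seq1 ?isA_linv Hy addn0.
Qed.



Lemma reducedw_nseq n x : reducedw (nseq n x).
Proof. by apply: (@reducedw_same_sign x.2); rewrite /same_sign all_nseq /= eqxx orbT. Qed.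

Lemma reducedw_cat_pair s x y t :
  reducedw (s ++ [:: x]) -> reducedw (y :: t) -> y != linv x -> reducedw (s ++ x :: y :: t).
Proof. by move=> Hs Ht Hxy; rewrite reducedw_cat_cons Hs; move: Ht; rewrite /reducedw /= Hxy. Qed.

Lemma reducedw_nseq_between s p n z t : reducedw (s ++ [:: p]) -> reducedw (linv p :: t) ->
  z != p -> z != linv p -> reducedw (s ++ p :: nseq n.+1 z ++ linv p :: t).
Proof.
move=> Hs Ht Hzp Hzp'; apply: reducedw_cat_pair Hs _ Hzp'.
have Ez u : z :: nseq n z ++ u = nseq n z ++ z :: u by elim: n => //= n ->.
have Hz : reducedw (nseq n z ++ [:: z]) by rewrite -Ez cats0; apply: reducedw_nseq n.+1 z.
rewrite Ez.
by apply: reducedw_cat_pair Hz Ht _; apply: contra_neq Hzp => /linv_inj.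
Qed.

Lemma reduce_rcons_keep_prefix u P B y : reduce u = P ++ B -> B <> [::] ->
  exists B', reduce (u ++ [:: y]) = P ++ B'.
Proof.
move=> E HB; rewrite reduce_catl E -catA; apply: reduce_rcons_prefix HB.
by rewrite -E reduce_reduced.
Qed.

Lemma reduce_rcons_A_bword P x t y : reducedw (P ++ x :: t) -> isA x -> ~~ isA y ->
  (forall t0, t <> t0 ++ [:: linv y]) -> reduce (P ++ x :: t ++ [:: y]) = P ++ x :: t ++ [:: y].
Proof.
move=> Hw Hx Hy Ht; rewrite -cat_cons catA.
case: (reduce_rcons_cases y Hw) => [[_ ->]|[w' [E _]]]; first by rewrite -catA.
case/lastP: t Ht E {Hw} => [_|t z Ht] E; exfalso.
  by move: E Hy; rewrite !cats1 -isA_linv => /rcons_inj[_ <-]; rewrite Hx.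
move: E; rewrite -rcons_cons -rcons_cat !cats1 => /rcons_inj[_ Ez].
by apply: (Ht t); rewrite Ez cats1.
Qed.

Section SignedBlock.
Variables (sg : bool) (k : nat) (p q : letter A) (M : word A).
Let V := nseq k p ++ q :: M ++ p :: nseq k q.
Hypothesis V_sign : same_sign sg V.
Hypothesis qp : q != p.

Lemma reduce_sign_block_cat_same t : reducedw t -> head_sign sg t ->
  reduce (V ++ t) = (nseq k p ++ [:: q]) ++ M ++ p :: nseq k q ++ t.
Proof.
move=> Ht Hx; rewrite reduce_id; first by rewrite /V -!catA /= -!catA.
exact: reducedw_cat_same_sign (reducedw_same_sign V_sign) Ht V_sign Hx.
Qed.

(* The [q]'s at the end of [V] and the [q^-1]'s starting [t] cancel down to a
   nonempty power of [q] or [q^-1], since [k0 != k]; this power is wedged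
   between [p] and [p^-1], so no further cancellation occurs. *)
Lemma reduce_sign_block_cat_opp k0 r : k0 != k -> reducedw (nseq k0 (linv q) ++ linv p :: r) ->
  exists B, reduce (V ++ nseq k0 (linv q) ++ linv p :: r) = (nseq k p ++ [:: q]) ++ M ++ p :: B.
Proof.
move=> Hk Ht; set X := nseq k p ++ q :: M.
have HX : reducedw (X ++ [:: p]).
  by apply: (@reducedw_catl _ (nseq k q)); rewrite /X -!catA /=; apply: reducedw_same_sign V_sign.
have Hr : reducedw (linv p :: r) := reducedw_catr Ht.
have sign_V x : x \in V -> x.2 = sg by move=> Vx; apply/eqP/(allP V_sign).
have Hp : p.2 = sg by apply: sign_V; rewrite !(mem_cat, inE) eqxx !orbT.
have Hq : q.2 = sg by apply: sign_V; rewrite !(mem_cat, inE) eqxx !orbT.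
have Hpq z : z \in [:: q; linv q] -> z != p /\ z != linv p.
  have neq_sign x y : x.2 != y.2 -> x != y by apply: contra_neq => ->.
  rewrite !inE => /orP[]/eqP->; rewrite ?(inj_eq linv_inj) qp;
    by split=> //; apply: neq_sign; rewrite /= Hp Hq; case: (sg).
have [n [z [Hz E]]] : exists n z, [/\ z \in [:: q; linv q] &
    reduce (V ++ nseq k0 (linv q) ++ linv p :: r) = reduce (X ++ p :: nseq n.+1 z ++ linv p :: r)].
  case: (ltngtP k k0) => [lt_k_k0 | lt_k0_k | Ek]; last by rewrite Ek eqxx in Hk.
  - have [d ->] : exists d, k0 = k + d.+1 by exists (k0 - k).-1; lia.
    exists d, (linv q); split; first by rewrite !inE eqxx orbT.
    rewrite nseqD -winv_nseq /V.
    have -> : (nseq k p ++ q :: M ++ p :: nseq k q) ++ (winv (nseq k q) ++ nseq d.+1 (linv q))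
                ++ linv p :: r =
              (X ++ [:: p]) ++ nseq k q ++ winv (nseq k q) ++ nseq d.+1 (linv q) ++ linv p :: r.
      by rewrite /X -!catA /= -!catA.
    by rewrite reduce_cancel -catA.
  - have [d Ek] : exists d, k = k0 + d.+1 by exists (k - k0).-1; lia.
    exists d, q; split; first by rewrite !inE eqxx.
    rewrite /V {2}Ek addnC nseqD -winv_nseq.
    have -> : (nseq k p ++ q :: M ++ p :: nseq d.+1 q ++ nseq k0 q) ++ winv (nseq k0 q)
                ++ linv p :: r =
              (X ++ p :: nseq d.+1 q) ++ nseq k0 q ++ winv (nseq k0 q) ++ linv p :: r.
      by rewrite /X -!catA /= -!catA /= -!catA.
    by rewrite reduce_cancel -catA.
have [Hzp Hzp'] := Hpq z Hz.
exists (nseq n.+1 z ++ linv p :: r); rewrite E reduce_id ?reducedw_nseq_between //.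
by rewrite /X -!catA.
Qed.

End SignedBlock.
Definition letter_img (f : Y A -> word A) x : word A :=
  if x.2 then winv (f x.1) else f x.1.
Definition flat_img (f : Y A -> word A) w : word A := flatten (map (letter_img f) w).

Section Substitution.
Variable f : Y A -> word A.

Lemma subst_homE w : subst_hom f w = reduce (flat_img f w).
Proof. by []. Qed.

Lemma flat_img_cat u v : flat_img f (u ++ v) = flat_img f u ++ flat_img f v.
Proof. by rewrite /flat_img map_cat flatten_cat. Qed.

Lemma flat_img_cons x u : flat_img f (x :: u) = letter_img f x ++ flat_img f u.
Proof. by []. Qed.

Lemma flat_img_seq1 x : flat_img f [:: x] = letter_img f x.
Proof. exact: cats0. Qed.

Lemma letter_img_linv x : letter_img f (linv x) = winv (letter_img f x).
Proof. by case: x => y []; rewrite /letter_img /= ?winvK. Qed.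

Lemma subst_hom_cat u v :
  subst_hom f (u ++ v) = reduce (subst_hom f u ++ subst_hom f v).
Proof. by rewrite !subst_homE flat_img_cat reduce_catl reduce_catr. Qed.

Lemma subst_hom_cons x u : subst_hom f (x :: u) = reduce (letter_img f x ++ subst_hom f u).
Proof. by rewrite !subst_homE flat_img_cons reduce_catr. Qed.

Lemma subst_hom_reduced u : reducedw (subst_hom f u).
Proof. exact: reduce_reduced. Qed.

Lemma subst_hom_reduce u : subst_hom f (reduce u) = subst_hom f u.
Proof.
elim: u => // x u IH; rewrite /= subst_hom_cons -IH.
have := reduce_reduced u; case: (reduce u) => [|z r] Hr /=; first by rewrite subst_hom_cons.
case: eqP => [->|_]; last by rewrite subst_hom_cons.
rewrite subst_hom_cons -reduce_catr letter_img_linv.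
have /= -> := reduce_cancel [::] (letter_img f x) (subst_hom f r).
by rewrite reduce_id // subst_hom_reduced.
Qed.

End Substitution.

(* [premul beta] is [a_1 |-> beta a a_1, b_i |-> b_i], so that [psi eta y] is
   [subst_hom (premul (vword eta y))]; when all [beta a] are [b]-words it is an
   automorphism with inverse [premul (fun a => winv (beta a))] ([premulK]). *)
Definition premul (beta : A -> word A) (z : Y A) : word A :=
  match z with
  | inl a => beta a ++ [:: (inl a, false)]
  | inr _ => [:: (z, false)]
  end.

Lemma letter_img_premul_pos beta a :
  letter_img (premul beta) (inl a, false) = beta a ++ [:: (inl a, false)].
Proof. by []. Qed.

Lemma letter_img_premul_neg beta a :
  letter_img (premul beta) (inl a, true) = (inl a, true) :: winv (beta a).
Proof. by rewrite /letter_img /= winv_cat. Qed.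

Lemma flat_img_bword beta t : bword t -> flat_img (premul beta) t = t.
Proof. by elim: t => // -[[a|b] e] t IH // /andP[_ /IH]; rewrite flat_img_cons => ->; case: e. Qed.

Lemma subst_premul_bword beta t : bword t -> reducedw t -> subst_hom (premul beta) t = t.
Proof. by move=> Ht Hr; rewrite subst_homE flat_img_bword // reduce_id. Qed.

Section Premul.
Variable beta : A -> word A.
Hypothesis bword_beta : forall a, bword (beta a).

Let phi := subst_hom (premul beta).
Let phi_inv := subst_hom (premul (fun a => winv (beta a))).

Lemma subst_premul_inv_img x : phi_inv (letter_img (premul beta) x) = [:: x].
Proof.
have bword_beta_inv a : bword (winv (beta a)) by rewrite bword_winv.
case: x => -[a|b] [] //; rewrite /phi_inv subst_homE.
  rewrite letter_img_premul_neg flat_img_cons letter_img_premul_neg winvK.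
  by rewrite flat_img_bword // -cat1s -catA reduce_cancel_r.
rewrite letter_img_premul_pos flat_img_cat flat_img_bword //.
by rewrite flat_img_seq1 letter_img_premul_pos reduce_cancel_l.
Qed.

Lemma premulK w : reducedw w -> phi_inv (phi w) = w.
Proof.
elim: w => // x w IH Hw.
rewrite /phi /phi_inv subst_hom_cons subst_hom_reduce subst_hom_cat -/phi_inv -/phi.
by rewrite subst_premul_inv_img IH ?(reducedw_tail Hw) // reduce_id.
Qed.

Lemma countA_flat_img_premul w : countA (flat_img (premul beta) w) = countA w.
Proof.
elim: w => // x w IH; rewrite flat_img_cons countA_cat IH.
case: x => -[a|b] [] //=; rewrite /letter_img /= ?countA_winv countA_cat countA_bword //.
Qed.

Lemma countA_subst_premul_le w : countA (phi w) <= countA w.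
Proof. by rewrite /phi subst_homE -{1}(countA_flat_img_premul w) countA_reduce. Qed.

End Premul.

Lemma countA_subst_premul beta w : (forall a, bword (beta a)) -> reducedw w ->
  countA (subst_hom (premul beta) w) = countA w.
Proof.
move=> Hb Hw; apply/eqP; rewrite eqn_leq countA_subst_premul_le //=.
rewrite -{1}(premulK Hb Hw); apply: countA_subst_premul_le => a.
by rewrite bword_winv.
Qed.

(* The final [a_1] cannot cancel: it would only do so against an [a_1^-1]
   coming from the image of [P], losing two [A]-letters, whereas [premul beta]
   preserves [countA]. *)
Lemma subst_premul_rcons_pos beta P c : (forall a, bword (beta a)) ->
  reducedw (P ++ [:: (inl c, false)]) ->
  exists P', subst_hom (premul beta) (P ++ [:: (inl c, false)]) = P' ++ [:: (inl c, false)].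
Proof.
move=> Hb HP; set ac : letter A := (inl c, false).
set X := reduce (flat_img (premul beta) P ++ beta c).
have EX : subst_hom (premul beta) (P ++ [:: ac]) = reduce (X ++ [:: ac]).
  by rewrite subst_homE flat_img_cat flat_img_seq1 letter_img_premul_pos catA reduce_catl.
case: (reduce_rcons_cases ac (reduce_reduced _ : reducedw X)) => [[_ EX']|[X' [EX' EX'']]].
  by exists X; rewrite EX EX'.
exfalso; have := countA_subst_premul Hb HP; rewrite EX EX'' countA_cat countA_seq1.
have := countA_reduce (flat_img (premul beta) P ++ beta c).
rewrite -/X EX' !countA_cat countA_flat_img_premul // (countA_bword (Hb c)) !countA_seq1.
by rewrite isA_linv /=; lia.
Qed.

Lemma subst_premul_rcons_pos_inv beta P Z c : (forall a, bword (beta a)) -> reducedw P ->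
  subst_hom (premul beta) P = Z ++ [:: (inl c, false)] ->
  exists P0, P = P0 ++ [:: (inl c, false)].
Proof.
move=> Hb HP E; have Hb' a : bword (winv (beta a)) by rewrite bword_winv.
rewrite -(premulK Hb HP) E; apply: subst_premul_rcons_pos Hb' _.
by rewrite -E subst_hom_reduced.
Qed.

Lemma reducedw_subst_premul_rcons_neg beta P c : (forall a, bword (beta a)) ->
  reducedw (P ++ [:: (inl c, true)]) ->
  reducedw (subst_hom (premul beta) P ++ [:: (inl c, true)]).
Proof.
move=> Hb HP.
case: (reduce_rcons_cases (inl c, true) (subst_hom_reduced (premul beta) P)) => [[] //|].
case=> Z [E _]; have [P0 EP] := subst_premul_rcons_pos_inv Hb (reducedw_catl HP) E.
by move: HP; rewrite EP -catA reducedw_cat_cons reducedw_pair eqxx andbF.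
Qed.

Lemma subst_premul_pos_bword beta P c t : (forall a, bword (beta a)) ->
  reducedw (P ++ (inl c, false) :: t) -> bword t ->
  exists P', subst_hom (premul beta) (P ++ (inl c, false) :: t) = P' ++ (inl c, false) :: t.
Proof.
move=> Hb; rewrite reducedw_cat_cons => /andP[HP Ht] Htb.
have [P' E] := subst_premul_rcons_pos Hb HP; exists P'.
rewrite -cat_rcons -cats1 subst_hom_cat E subst_premul_bword ?(reducedw_tail Ht) //.
by rewrite -catA reduce_id // reducedw_cat_cons -E subst_hom_reduced.
Qed.

Lemma subst_premul_neg_bword beta P c t : (forall a, bword (beta a)) ->
  reducedw (P ++ (inl c, true) :: t) -> bword t ->
  subst_hom (premul beta) (P ++ (inl c, true) :: t) =
  subst_hom (premul beta) P ++ (inl c, true) :: reduce (winv (beta c) ++ t).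
Proof.
move=> Hb HP Ht; rewrite reducedw_cat_cons in HP; case/andP: HP => HP _.
rewrite subst_homE flat_img_cat flat_img_cons letter_img_premul_neg (flat_img_bword _ Ht).
rewrite reduce_catl -subst_homE cat_cons reduce_A_bword //.
  exact: reducedw_subst_premul_rcons_neg.
by rewrite bword_cat bword_winv Hb.
Qed.

End FreeGroup.

Lemma two_eta_lt_Dconst (A : finType) (eta : Y A * A -> nat) :
  0 < #|A| -> (forall p, eta p <= Dconst A %/ 4) -> forall p, 2 * eta p < Dconst A.
Proof.
move=> hA eta_le p; have := eta_le p; rewrite /Dconst -mulnA mulKn //.
have : 0 < #|A| * (#|A| + 2) by rewrite muln_gt0 hA addn_gt0 orbT.
lia.
Qed.

Section Machine.
Variable A : finType.
Variable eta : Y A * A -> nat.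
Hypothesis eta_inj : injective eta.
Hypothesis eta_small : forall p, 2 * eta p < Dconst A.
Implicit Types (w : word A) (r : Y A * bool).

Lemma vword_shape y a : exists M,
  vword eta y a = nseq (eta (y, a)) (b1 A) ++ b2 A :: M ++ b1 A :: nseq (eta (y, a)) (b2 A).
Proof.
have [m Em] : exists m, Dconst A - 2 * eta (y, a) = m.+1.
  by exists (Dconst A - 2 * eta (y, a)).-1; have := eta_small (y, a); lia.
suff [M EM] : exists M, flatten (nseq m.+1 [:: b2 A; b1 A]) = b2 A :: M ++ [:: b1 A].
  by exists M; rewrite /vword Em EM /= -catA.
elim: m {Em} => [|m [M IH]]; first by exists [::].
exists [:: b1 A, b2 A & M].
by rewrite (_ : flatten _ = [:: b2 A; b1 A] ++ flatten (nseq m.+1 [:: b2 A; b1 A])) // IH.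
Qed.

Lemma same_sign_vword y a : same_sign false (vword eta y a).
Proof.
rewrite /same_sign /vword !all_cat !all_nseq /= !orbT /=.
by elim: (Dconst A - _) => //= n ->.
Qed.

Lemma bword_vword y a : bword (vword eta y a).
Proof.
rewrite /bword /vword !all_cat !all_nseq /= !orbT /=.
by elim: (Dconst A - _) => //= n ->.
Qed.

(* [vsigned e y c] is [v(y,c)] if [e] and [v(y,c)^-1] otherwise; in both cases
   it has the form [p^k q M p q^k] with [p = vp e], [q = vq e], [k = eta (y,c)],
   all of whose letters have exponent flag [~~ e]. *)
Definition vp (e : bool) : letter A := if e then b1 A else linv (b2 A).
Definition vq (e : bool) : letter A := if e then b2 A else linv (b1 A).
Definition vsigned (e : bool) (y : Y A) (c : A) : word A :=
  if e then vword eta y c else winv (vword eta y c).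
Definition vhead (k : nat) (e : bool) : word A := nseq k (vp e) ++ [:: vq e].

Lemma vq_neq_vp e : vq e != vp e.
Proof. by case: e. Qed.

Lemma vsigned_shape e y c : exists M, vsigned e y c =
  nseq (eta (y, c)) (vp e) ++ vq e :: M ++ vp e :: nseq (eta (y, c)) (vq e).
Proof.
have [M EM] := vword_shape y c; case: e; first by exists M.
exists (winv M); rewrite /vsigned EM !(winv_cat, winv_cons, winv_nseq).
by rewrite -!catA.
Qed.

Lemma same_sign_vsigned e y c : same_sign (~~ e) (vsigned e y c).
Proof.
have := same_sign_vword y c; case: e => //.
by rewrite /same_sign /vsigned all_winv => /sub_all; apply=> -[z []].
Qed.

Lemma bword_vsigned e y c : bword (vsigned e y c).
Proof. by case: e; rewrite /vsigned ?bword_winv bword_vword. Qed.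

Lemma bword_vword_inv y a : bword (winv (vword eta y a)).
Proof. exact: bword_vsigned false y a. Qed.

Lemma apply_rule_posE y w :
  apply_rule eta (y, false) w = reduce (subst_hom (premul (vword eta y)) w ++ [:: (y, true)]).
Proof. by []. Qed.

Lemma apply_rule_negE y w : apply_rule eta (y, true) w =
  subst_hom (premul (fun a => winv (vword eta y a))) (reduce (w ++ [:: (y, false)])).
Proof. by []. Qed.

Lemma reducedw_apply_rule r w : reducedw (apply_rule eta r w).
Proof. by case: r => y []; apply: reduce_reduced. Qed.

Lemma countA_apply_B w b e : reducedw w -> countA (apply_rule eta (inr b, e) w) = countA w.
Proof.
move=> Hw; case: e.
  rewrite apply_rule_negE countA_subst_premul ?reduce_reduced //; last exact: bword_vword_inv.
  exact: countA_reduce_rcons_B.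
rewrite apply_rule_posE countA_reduce_rcons_B ?subst_hom_reduced //.
exact: countA_subst_premul (bword_vword _) Hw.
Qed.

(* [shielded w r]: [w] is reduced and its last [A]-letter [c^s] is followed by a
   word [t] in the [b_i] which, given that [w] was produced by the rule [r],
   prevents every rule other than the inverse of [r] from cancelling [c^s]. *)
Definition shield (c : A) (s : bool) (t : word A) r : Prop :=
  match r with
  | (inl c', e) => [/\ t = [::], c = c' & s = ~~ e]
  | (inr b, e) => if s then exists R, t = vhead (eta (inr b, c)) e ++ R
                  else exists t0, t = t0 ++ [:: (inr b, ~~ e)]
  end.

Definition shielded w r : Prop :=
  reducedw w /\ exists Q c s t, [/\ w = Q ++ (inl c, s) :: t, bword t & shield c s t r].

Lemma apply_A_cases d e w : reducedw w ->
  countA (apply_rule eta (inl d, e) w) = (countA w).+1 /\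
    shielded (apply_rule eta (inl d, e) w) (inl d, e) \/
  countA (apply_rule eta (inl d, e) w) < countA w /\ exists w0, w = w0 ++ [:: (inl d, e)].
Proof.
move=> Hw; case: e.
- have Hb := bword_vword_inv (inl d).
  rewrite apply_rule_negE; case: (reduce_rcons_cases (inl d, false) Hw) => [[Hw1 ->]|[w' [Ew ->]]].
    have [P' EP] := subst_premul_rcons_pos Hb Hw1.
    left; rewrite countA_subst_premul // countA_cat countA_seq1 addn1; split=> //.
    by split; [exact: subst_hom_reduced | exists P', d, false, [::]].
  have Hw' : reducedw w' by move: Hw; rewrite Ew => /reducedw_catl.
  by right; rewrite countA_subst_premul // Ew countA_cat countA_seq1 addn1; split=> //; exists w'.
- have Hb := bword_vword (inl d).
  have Hpsi := subst_hom_reduced (premul (vword eta (inl d))) w.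
  rewrite apply_rule_posE; case: (reduce_rcons_cases (inl d, true) Hpsi) => [[HZ ->]|[w' [Ew ->]]].
    left; rewrite countA_cat countA_subst_premul // countA_seq1 addn1; split=> //.
    by split=> //; exists (subst_hom (premul (vword eta (inl d))) w), d, true, [::].
  right; split; last exact: subst_premul_rcons_pos_inv Hb Hw Ew.
  by have := countA_subst_premul Hb Hw; rewrite Ew countA_cat countA_seq1 /=; lia.
Qed.

Lemma shielded_rcons_A w r d sg w0 :
  shielded w r -> w = w0 ++ [:: (inl d, sg)] -> r = (inl d, ~~ sg).
Proof.
case=> _ [Q [c [s [t [-> Ht Hsh]]]]].
case/lastP: t Ht Hsh => [|t x] Ht Hsh.
  rewrite !cats1 => /rcons_inj[_ <- <-].
  case: r Hsh => -[c'|b0] e0 /=; first by case=> _ -> ->; rewrite negbK.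
  by case: (s) => -[R]; [rewrite /vhead -catA; case: (nseq _ _) | case: R].
rewrite -rcons_cons -rcons_cat !cats1 => /rcons_inj[_ Ex].
by move: Ht; rewrite /bword all_rcons Ex.
Qed.

Lemma apply_B_neg_shape Q c t b e : reducedw (Q ++ (inl c, true) :: t) -> bword t ->
  exists Q', apply_rule eta (inr b, e) (Q ++ (inl c, true) :: t) =
    Q' ++ (inl c, true) :: reduce (vsigned e (inr b) c ++ t ++ [:: (inr b, ~~ e)]).
Proof.
move=> Hw Ht; have Hw1 : reducedw (Q ++ [:: (inl c, true)]).
  by move: Hw; rewrite reducedw_cat_cons => /andP[].
have Hty e' : bword (t ++ [:: (inr b, e')]) by rewrite bword_cat Ht.
case: e.
- rewrite apply_rule_negE -catA /= reduce_A_bword //.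
  have Hr : reducedw (Q ++ (inl c, true) :: reduce (t ++ [:: (inr b, false)])).
    by rewrite -reduce_A_bword ?reduce_reduced.
  rewrite subst_premul_neg_bword ?bword_reduce //; last exact: bword_vword_inv.
  by eexists; rewrite winvK -reduce_catr.
- rewrite apply_rule_posE subst_premul_neg_bword //; last exact: bword_vword.
  set X := subst_hom _ Q; exists X.
  rewrite -catA /= reduce_A_bword //.
  + by rewrite -reduce_catl -catA.
  + exact: reducedw_subst_premul_rcons_neg (bword_vword _) Hw1.
  + by rewrite bword_cat bword_reduce // bword_cat bword_vword_inv.
Qed.

Lemma apply_B_pos_shape Q c t b e : reducedw (Q ++ (inl c, false) :: t) -> bword t ->
  (forall t0, t <> t0 ++ [:: (inr b, e)]) ->
  exists Q', apply_rule eta (inr b, e) (Q ++ (inl c, false) :: t) =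
    Q' ++ (inl c, false) :: t ++ [:: (inr b, ~~ e)].
Proof.
move=> Hw Ht Hlast; have Hty : bword (t ++ [:: (inr b, ~~ e)]) by rewrite bword_cat Ht.
have {}Hlast t0 : t <> t0 ++ [:: linv (inr b, ~~ e)] by rewrite /linv /= negbK.
case: e Hty Hlast => Hty Hlast.
- rewrite apply_rule_negE -catA /= reduce_rcons_A_bword //.
  apply: subst_premul_pos_bword (bword_vword_inv (inr b)) _ Hty.
  by rewrite -reduce_rcons_A_bword ?reduce_reduced.
- rewrite apply_rule_posE; have [P' EP] := subst_premul_pos_bword (bword_vword (inr b)) Hw Ht.
  exists P'; rewrite EP -catA /= reduce_rcons_A_bword //.
  by rewrite -EP subst_hom_reduced.
Qed.

Lemma shield_neg_cases c t r b e : shield c true t r -> (inr b, e) != inv_rule r ->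
  head_sign (~~ e) t \/
  exists k0 R, k0 != eta (inr b, c) /\ t = nseq k0 (linv (vq e)) ++ linv (vp e) :: R.
Proof.
case: r => -[c'|b0] e0 /=; first by case=> -> _ _; left.
case=> R ->; case: (eqVneq e0 e) => [-> _|He0].
  by left; rewrite /vhead; case: (eta _); case: (e).
have {He0} -> : e0 = ~~ e by case: e0 e He0 => [] [].
move=> Hne; right; exists (eta (inr b0, c)), R; split.
  by apply: contra_neq Hne => /eta_inj[->]; rewrite /inv_rule /= negbK.
by rewrite /vhead -catA; case: (e).
Qed.

Lemma shield_pos_tail c t r b e : shield c false t r -> (inr b, e) != inv_rule r ->
  forall t0, t <> t0 ++ [:: (inr b, e)].
Proof.
case: r => -[c'|b0] e0 /=; first by case=> -> _ _ _ t0; case: t0.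
case=> t1 -> Hne t0; rewrite !cats1 => /rcons_inj[_ Eb He].
by move: Hne; rewrite /inv_rule /= Eb -He eqxx.
Qed.

Lemma shielded_step_B w r b e : shielded w r -> (inr b, e) != inv_rule r ->
  shielded (apply_rule eta (inr b, e) w) (inr b, e).
Proof.
case=> Hw [Q [c [s [t [Ew Ht Hsh]]]]] Hne; subst w; split; first exact: reducedw_apply_rule.
have Htr : reducedw t by apply: reducedw_tail (reducedw_catr Hw).
case: s Hsh Hw => Hsh Hw.
- have [Q' ->] := apply_B_neg_shape b e Hw Ht.
  exists Q', c, true, (reduce (vsigned e (inr b) c ++ t ++ [:: (inr b, ~~ e)])); split=> //.
    by apply: bword_reduce; rewrite !bword_cat bword_vsigned Ht.
  have [M EM] := vsigned_shape e (inr b) c.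
  have Vs := same_sign_vsigned e (inr b) c; rewrite EM in Vs.
  have [B EB] : exists B, reduce (vsigned e (inr b) c ++ t) =
      (nseq (eta (inr b, c)) (vp e) ++ [:: vq e]) ++ M ++ vp e :: B.
    rewrite EM; case: (shield_neg_cases Hsh Hne) => [Hx | [k0 [R [Hk Et]]]].
      by rewrite (reduce_sign_block_cat_same Vs Htr Hx); eexists.
    by rewrite Et; apply: (reduce_sign_block_cat_opp Vs (vq_neq_vp e) Hk); rewrite -Et.
  by rewrite catA; apply: reduce_rcons_keep_prefix EB _; case: M {EM Vs}.
- have [Q' ->] := apply_B_pos_shape Hw Ht (shield_pos_tail Hsh Hne).
  exists Q', c, false, (t ++ [:: (inr b, ~~ e)]); split=> //; first by rewrite bword_cat Ht.
  by exists t.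
Qed.

Lemma shielded_step w r r' : shielded w r -> r' != inv_rule r ->
  countA w <= countA (apply_rule eta r' w) /\ shielded (apply_rule eta r' w) r'.
Proof.
move=> Hsh Hne; have Hw := Hsh.1.
case: r' Hne => -[d|b] e Hne; last first.
  by rewrite countA_apply_B //; split=> //; apply: shielded_step_B Hsh Hne.
case: (apply_A_cases d e Hw) => [[-> ?] | [_ [w0 Ew]]]; first by split.
by move: Hne; rewrite (shielded_rcons_A Hsh Ew) /inv_rule /= negbK eqxx.
Qed.

Lemma shielded_first w r : reducedw w -> countA w < countA (apply_rule eta r w) ->
  shielded (apply_rule eta r w) r.
Proof.
move=> Hw; case: r => -[d|b] e; last by rewrite countA_apply_B // ltnn.
by case: (apply_A_cases d e Hw) => [[_ ?] | [C _] /(ltn_trans C)]; rewrite ?ltnn.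
Qed.

End Machine.

Theorem lemma5p8 (A : finType) (hA : 0 < #|A|)
  (eta : Y A * A -> nat) (eta_inj : injective eta)
  (eta_range : forall p, 1 <= eta p <= Dconst A %/ 4)
  (eta_onto : forall k, 1 <= k <= Dconst A %/ 4 -> exists p, eta p = k)
  (t : nat) (w : nat -> word A) (h : nat -> Y A * bool)
  (hw0 : reducedw (w 0))
  (hcomp : forall i, 1 <= i <= t -> w i = apply_rule eta (h i) (w i.-1))
  (hred : forall i, 1 <= i < t -> h i.+1 != inv_rule (h i))
  (hinc : countA (w 0) < countA (w 1)) :
  forall i, 1 <= i <= t -> countA (w i.-1) <= countA (w i).
Proof.
have eta_small := two_eta_lt_Dconst hA (fun p => proj2 (andP (eta_range p))).
suff H i : 1 <= i <= t -> countA (w i.-1) <= countA (w i) /\ shielded eta (w i) (h i).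
  by move=> i /H[].
elim: i => [|[|i] IH] // Hi.
  split; first exact: ltnW.
  by rewrite (hcomp 1 Hi); apply: shielded_first; rewrite // -(hcomp 1 Hi).
have Hi' : i.+1 < t by case/andP: Hi.
rewrite (hcomp i.+2 Hi); apply: (shielded_step eta_inj eta_small).
  exact: (IH (ltnW Hi')).2.
by apply: hred; rewrite Hi'.
Qed.
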